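(* Let $\mathcal D$ be a complete, cocomplete, extremally co-well-powered (extremal epi, mono) category, and let $X=(d,F)$ be an object of $\mathcal K(\mathcal D)$. For $\phi\in F$ with target $d_\phi$, the morphism $\phi$ is a $\mathcal K(\mathcal D)$-morphism $\bar\phi\colon X\to\Delta(d_\phi)$. Then the saturation $\Phi(X)$, in the category $\mathcal K(\mathcal D)$, of the class $\{\bar\phi:\phi\in F\}$ is a reduced iso-filtration on $X$ in $\mathcal K(\mathcal D)$; that is, $(X,\Phi(X))$ is an object of $\mathcal K(\mathcal K(\mathcal D))$, and this assignment (identity on morphisms) defines a functor $\Phi\colon\mathcal K(\mathcal D)\to\mathcal K(\mathcal K(\mathcal D))$.
   Context: For a category $\mathcal D$ and an object $d$, $M(d)$ denotes the class of all morphisms with source $d$, quasi-ordered by $\phi_1\ge\phi_2$ iff there is $h$ with $h\phi_1=\phi_2$. A projective filtration on $d$ is a non-empty, directed, saturated subclass $F\subseteq M(d)$ (saturated: $\phi_1\in F$, $\phi_1\ge\phi_2$ imply $\phi_2\in F$); the saturation of a non-empty directed $S\subseteq M(d)$ is $\{\psi:\psi\le\phi$ for some $\phi\in S\}$. A subclass $S\subseteq F$ is initial if every $\phi\in F$ satisfies $\phi\le\psi$ for some $\psi\in S$. For $f\colon d'\to d$, $f^*(F)=\{\phi f:\phi\in F\}$. $\mathcal P(\mathcal D)$ has objects $(d,F)$, and morphisms $(d_1,F_1)\to(d_2,F_2)$ the morphisms $f\colon d_1\to d_2$ of $\mathcal D$ with $f^*(F_2)\subseteq F_1$. $F$ is reduced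 if it has an initial subclass of extremal epimorphisms; $\mathcal Q(\mathcal D)$ is the full subcategory of reduced filtered objects. For $(d,F)\in\mathcal Q(\mathcal D)$, $(F,\mathcal D)$ is the category with objects the elements of $F$ and morphisms $\phi_1\to\phi_2$ the morphisms $g$ between their targets with $g\phi_1=\phi_2$; $\varprojlim F$ is the limit of the target functor $(F,\mathcal D)\to\mathcal D$, with canonical morphism $d\to\varprojlim F$. $(d,F)$ is an iso-filtration if this morphism is an isomorphism; $\mathcal K(\mathcal D)$ is the full subcategory of $\mathcal Q(\mathcal D)$ of iso-filtrations. $\Delta(e)=(e,M(e))$ is the discrete filtration, an object of $\mathcal K(\mathcal D)$. Under the hypotheses, $\mathcal K(\mathcal D)$ is itself complete, cocomplete, extremally co-well-powered and (extremal epi, mono), so $\mathcal K(\mathcal K(\mathcal D))$ is defined by applying the same constructions to $\mathcal K(\mathcal D)$. *)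

From Stdlib Require Import ProofIrrelevance.
Set Implicit Arguments.
Unset Strict Implicit.

Record Category := {
  Obj :> Type;
  Hom : Obj -> Obj -> Type;
  comp : forall a b c : Obj, Hom b c -> Hom a b -> Hom a c;
  idm : forall a : Obj, Hom a a;
  comp_assoc : forall a b c d (h : Hom c d) (g : Hom b c) (f : Hom a b),
      comp h (comp g f) = comp (comp h g) f;
  comp_id_l : forall a b (f : Hom a b), comp (idm b) f = f;
  comp_id_r : forall a b (f : Hom a b), comp f (idm a) = f }.

Arguments Hom {C} a b : rename.
Arguments comp {C a b c} g f : rename.
Arguments idm {C} a : rename.

Record SmallCat := {
  sObj : Set;
  sHom : sObj -> sObj -> Set;
  scomp : forall i j k, sHom j k -> sHom i j -> sHom i k;
  sid : forall i, sHom i i;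
  scomp_assoc : forall i j k l (h : sHom k l) (g : sHom j k) (f : sHom i j),
      scomp h (scomp g f) = scomp (scomp h g) f;
  scomp_id_l : forall i j (f : sHom i j), scomp (sid j) f = f;
  scomp_id_r : forall i j (f : sHom i j), scomp f (sid i) = f }.

Arguments sHom {J} i j : rename.
Arguments scomp {J i j k} g f : rename.
Arguments sid {J} i : rename.

Section CatDefs.
Variable C : Category.

Definition mono {a b : C} (f : Hom a b) : Prop :=
  forall z (g h : Hom z a), comp f g = comp f h -> g = h.
Definition epi {a b : C} (f : Hom a b) : Prop :=
  forall z (g h : Hom b z), comp g f = comp h f -> g = h.
Definition iso {a b : C} (f : Hom a b) : Prop :=
  exists g : Hom b a, comp g f = idm a /\ comp f g = idm b.
Definition extremal_epi {a b : C} (e : Hom a b) : Prop :=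
  epi e /\ forall c (g : Hom a c) (m : Hom c b), mono m -> comp m g = e -> iso m.

Definition ExtrEpiMono_category : Prop :=
  (forall a b (f : Hom a b), exists c (e : Hom a c) (m : Hom c b),
      extremal_epi e /\ mono m /\ comp m e = f) /\
  (forall a b c d (e : Hom a b) (m : Hom c d) (f : Hom a c) (g : Hom b d),
      extremal_epi e -> mono m -> comp g e = comp m f ->
      exists t : Hom b c, (comp t e = f /\ comp m t = g) /\
        forall t' : Hom b c, comp t' e = f /\ comp m t' = g -> t' = t).

Record Diagram (J : SmallCat) := {
  dob : sObj J -> Obj C;
  dmor : forall i j, sHom i j -> Hom (dob i) (dob j);
  dmor_id : forall i, dmor (sid i) = idm (dob i);
  dmor_comp : forall i j k (g : sHom j k) (f : sHom i j),
      dmor (scomp g f) = comp (dmor g) (dmor f) }.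

Definition is_cone {J} (D : Diagram J) (c : C) (l : forall i, Hom c (dob D i)) :=
  forall i j (u : sHom i j), comp (dmor D u) (l i) = l j.
Definition is_cocone {J} (D : Diagram J) (c : C) (l : forall i, Hom (dob D i) c) :=
  forall i j (u : sHom i j), comp (l j) (dmor D u) = l i.

Definition is_limit {J} (D : Diagram J) (c : C) (l : forall i, Hom c (dob D i)) :=
  @is_cone J D c l /\
  forall c' (l' : forall i, Hom c' (dob D i)), @is_cone J D c' l' ->
    exists h : Hom c' c, (forall i, comp (l i) h = l' i) /\
      forall h' : Hom c' c, (forall i, comp (l i) h' = l' i) -> h' = h.
Definition is_colimit {J} (D : Diagram J) (c : C) (l : forall i, Hom (dob D i) c) :=
  @is_cocone J D c l /\
  forall c' (l' : forall i, Hom (dob D i) c'), @is_cocone J D c' l' ->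
    exists h : Hom c c', (forall i, comp h (l i) = l' i) /\
      forall h' : Hom c c', (forall i, comp h' (l i) = l' i) -> h' = h.

Definition complete : Prop :=
  forall J (D : Diagram J), exists c l, @is_limit J D c l.
Definition cocomplete : Prop :=
  forall J (D : Diagram J), exists c l, @is_colimit J D c l.

Definition extremally_co_well_powered : Prop :=
  forall a : C, exists (I : Set) (tgt : I -> Obj C) (q : forall i, Hom a (tgt i)),
    (forall i, extremal_epi (q i)) /\
    forall b (e : Hom a b), extremal_epi e ->
      exists i (u : Hom (tgt i) b), iso u /\ comp u (q i) = e.

Definition Mclass (a : C) := forall b : C, Hom a b -> Prop.

Definition mge {a b1 b2 : C} (f1 : Hom a b1) (f2 : Hom a b2) : Prop :=
  exists h : Hom b1 b2, comp h f1 = f2.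

Definition is_filtration {a : C} (F : Mclass a) : Prop :=
  (exists b (f : Hom a b), F b f) /\
  (forall b1 (f1 : Hom a b1) b2 (f2 : Hom a b2), F b1 f1 -> F b2 f2 ->
      exists b3 (f3 : Hom a b3), F b3 f3 /\ mge f3 f1 /\ mge f3 f2) /\
  (forall b1 (f1 : Hom a b1) b2 (f2 : Hom a b2), F b1 f1 -> mge f1 f2 -> F b2 f2).

Definition is_reduced {a : C} (F : Mclass a) : Prop :=
  exists S : Mclass a,
    (forall b f, S b f -> F b f) /\
    (forall b f, S b f -> extremal_epi f) /\
    (forall b f, F b f -> exists b' f', S b' f' /\ mge f' f).

(* The canonical cone (phi)_{phi in F} from a to the target functor
   (F, C) -> C is a limit cone, i.e. a -> lim F is an isomorphism. *)
Definition is_iso_filtration {a : C} (F : Mclass a) : Prop :=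
  forall (c : C) (psi : forall b (f : Hom a b), F b f -> Hom c b),
    (forall b1 (f1 : Hom a b1) (H1 : F b1 f1) b2 (f2 : Hom a b2) (H2 : F b2 f2)
            (g : Hom b1 b2), comp g f1 = f2 -> comp g (psi b1 f1 H1) = psi b2 f2 H2) ->
    exists h : Hom c a, (forall b f (H : F b f), comp f h = psi b f H) /\
      forall h' : Hom c a, (forall b f (H : F b f), comp f h' = psi b f H) -> h' = h.

End CatDefs.

Arguments Mclass {C} a.

Record KObj (C : Category) := {
  kd : Obj C;
  kF : Mclass kd;
  k_filt : is_filtration kF;
  k_red : is_reduced kF;
  k_iso : is_iso_filtration kF }.

Arguments kd {C} k.
Arguments kF {C} k b f.

Definition KHom (C : Category) (X Y : KObj C) : Type :=
  { f : Hom (kd X) (kd Y) | forall b (p : Hom (kd Y) b), kF Y b p -> kF X b (comp p f) }.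

Lemma KHom_eq C X Y (f g : @KHom C X Y) : proj1_sig f = proj1_sig g -> f = g.
Proof.
  destruct f as [f Hf], g as [g Hg]; simpl; intros ->.
  f_equal; apply proof_irrelevance.
Qed.

Definition Kcomp C (X Y Z : KObj C) (g : KHom Y Z) (f : KHom X Y) : KHom X Z.
Proof.
  exists (comp (proj1_sig g) (proj1_sig f)).
  intros b p Hp. rewrite comp_assoc.
  apply (proj2_sig f). apply (proj2_sig g). exact Hp.
Defined.

Definition Kid C (X : KObj C) : KHom X X.
Proof. exists (idm (kd X)). intros b p Hp. rewrite comp_id_r. exact Hp. Defined.

Definition Kcat (C : Category) : Category.
Proof.
  refine {| Obj := KObj C; Hom := @KHom C; comp := @Kcomp C; idm := @Kid C |}.
  - intros; apply KHom_eq; simpl; apply comp_assoc.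
  - intros; apply KHom_eq; simpl; apply comp_id_l.
  - intros; apply KHom_eq; simpl; apply comp_id_r.
Defined.

Lemma Delta_filt (C : Category) (e : C) : @is_filtration C e (fun (b : C) (_ : Hom (C:=C) e b) => True).
Proof.
  split; [exists e, (idm e); exact I|split].
  - intros b1 f1 b2 f2 _ _. exists e, (idm e). split; [exact I|split].
    + exists f1; apply comp_id_r.
    + exists f2; apply comp_id_r.
  - intros; exact I.
Qed.

Lemma id_extremal_epi (C : Category) (e : C) : extremal_epi (idm e).
Proof.
  split.
  - intros z g h H. rewrite !comp_id_r in H. exact H.
  - intros c g m Hm Hmg. exists g. split.
    + apply Hm. rewrite comp_assoc, Hmg, comp_id_l, comp_id_r. reflexivity.
    + exact Hmg.
Qed.

Lemma Delta_red (C : Category) (e : C) : @is_reduced C e (fun (b : C) (_ : Hom (C:=C) e b) => True).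
Proof.
  exists (fun b (f : Hom e b) => exists H : e = b,
            f = match H in _ = b' return Hom e b' with eq_refl => idm e end).
  split; [intros; exact I|split].
  - intros b f [H ->]. destruct H. apply id_extremal_epi.
  - intros b f _. exists e, (idm e). split.
    + exists eq_refl. reflexivity.
    + exists f; apply comp_id_r.
Qed.

Lemma Delta_iso (C : Category) (e : C) : @is_iso_filtration C e (fun (b : C) (_ : Hom (C:=C) e b) => True).
Proof.
  intros c psi Hpsi. exists (psi e (idm e) I). split.
  - intros b f H. destruct H. apply Hpsi. apply comp_id_r.
  - intros h' Hh'. rewrite <- (Hh' e (idm e) I). symmetry. apply comp_id_l.
Qed.

Definition Delta (C : Category) (e : C) : KObj C :=
  {| kd := e; kF := fun _ _ => True;
     k_filt := @Delta_filt C e; k_red := @Delta_red C e; k_iso := @Delta_iso C e |}.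

Definition phibar C (X : KObj C) (b : C) (phi : Hom (kd X) b) (H : kF X b phi)
  : Hom (C := Kcat C) X (Delta b).
Proof.
  exists phi. intros b' p _. simpl in *.
  destruct (k_filt X) as [_ [_ Hsat]].
  apply (Hsat b phi b' (comp p phi) H). exists p; reflexivity.
Defined.

Definition PhiK C (X : KObj C) : Mclass (C := Kcat C) X :=
  fun (Y : Kcat C) (chi : Hom (C := Kcat C) X Y) =>
    exists (b : C) (phi : Hom (kd X) b) (H : kF X b phi),
      mge (C := Kcat C) (phibar H) chi.
Arguments PhiK {C} X _ _.

(* Every member [chi] of [Phi(X)] factors through some [phibar phi], and a
   factorization [k] of [phi] in the underlying category is also one in [K],
   because morphisms out of a discrete filtration [Delta b] are unrestricted.
   Hence [Phi(X)] inherits directedness, reducedness and the limit property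
   from [F] itself: a cone over [Phi(X)] restricts to a cone over [F], whose
   mediating morphism into [X] is automatically a [K]-morphism. *)

Lemma mge_refl (C : Category) (a b : C) (f : Hom a b) : mge f f.
Proof. exists (idm b). apply comp_id_l. Qed.

Lemma mge_trans (C : Category) (a b1 b2 b3 : C)
  (f1 : Hom a b1) (f2 : Hom a b2) (f3 : Hom a b3) :
  mge f1 f2 -> mge f2 f3 -> mge f1 f3.
Proof.
  intros [h1 E1] [h2 E2]. exists (comp h2 h1).
  rewrite <- comp_assoc, E1. exact E2.
Qed.

Arguments mge_refl {C a b} f.
Arguments mge_trans {C a b1 b2 b3 f1 f2 f3} _ _.

Definition Delta_hom (C : Category) (b : C) (Y : KObj C) (n : Hom b (kd Y)) :
  Hom (C := Kcat C) (Delta b) Y := exist _ n (fun _ _ _ => I).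
Arguments Delta_hom {C b} Y n.

Lemma Kmono_mono (C : Category) (Y Z : KObj C) (m : Hom (C := Kcat C) Y Z) :
  mono (C := Kcat C) m -> mono (proj1_sig m).
Proof.
  intros Hm z g h E.
  assert (Egh : Delta_hom (b := z) Y g = Delta_hom Y h).
  { apply Hm. apply KHom_eq. exact E. }
  exact (f_equal (@proj1_sig _ _) Egh).
Qed.
Arguments Kmono_mono {C Y Z m} _ _ _ _ _.

Section PhiK.
Variables (C : Category) (X : KObj C).

Lemma phibar_mge b1 (phi1 : Hom (kd X) b1) (H1 : kF X b1 phi1)
  b2 (phi2 : Hom (kd X) b2) (H2 : kF X b2 phi2) :
  mge phi1 phi2 -> mge (C := Kcat C) (phibar H1) (phibar H2).
Proof.
  intros [g Eg]. exists (Delta_hom (Delta b2) g). apply KHom_eq. exact Eg.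
Qed.
Arguments phibar_mge {b1 phi1} H1 {b2 phi2} H2 _.

Lemma phibar_extremal_epi b (phi : Hom (kd X) b) (H : kF X b phi) :
  extremal_epi phi -> extremal_epi (C := Kcat C) (phibar H).
Proof.
  intros [Hepi Hext]. split.
  - intros Z g h E. apply KHom_eq, Hepi. exact (f_equal (@proj1_sig _ _) E).
  - intros Y g m Hm E.
    destruct (Hext _ _ _ (Kmono_mono Hm) (f_equal (@proj1_sig _ _) E))
      as [n [En1 En2]].
    exists (Delta_hom Y n). split; apply KHom_eq; assumption.
Qed.

Lemma PhiK_phibar b (phi : Hom (kd X) b) (H : kF X b phi) :
  PhiK X (Delta b) (phibar H).
Proof. exists b, phi, H. apply mge_refl. Qed.
Arguments PhiK_phibar {b phi} H.

Lemma PhiK_is_filtration : is_filtration (C := Kcat C) (PhiK X).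
Proof.
  destruct (k_filt X) as [[b0 [phi0 H0]] [Fdir _]].
  split; [|split].
  - exists (Delta b0), (phibar H0). apply PhiK_phibar.
  - intros Y1 chi1 Y2 chi2 [b1 [p1 [H1 M1]]] [b2 [p2 [H2 M2]]].
    destruct (Fdir _ _ _ _ H1 H2) as [b3 [p3 [H3 [G1 G2]]]].
    exists (Delta b3), (phibar H3). split; [apply PhiK_phibar|split].
    + exact (mge_trans (phibar_mge H3 H1 G1) M1).
    + exact (mge_trans (phibar_mge H3 H2 G2) M2).
  - intros Y1 chi1 Y2 chi2 [b1 [p1 [H1 M1]]] M.
    exists b1, p1, H1. exact (mge_trans M1 M).
Qed.

Lemma PhiK_is_reduced : is_reduced (C := Kcat C) (PhiK X).
Proof.
  destruct (k_red X) as [S [SF [Sext Sinit]]].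
  exists (fun Y chi => PhiK X Y chi /\ extremal_epi (C := Kcat C) chi).
  split; [intros Y chi [P _]; exact P|split; [intros Y chi [_ E]; exact E|]].
  intros Y chi [b1 [p1 [H1 M1]]].
  destruct (Sinit _ _ H1) as [b [p [Sp G]]].
  exists (Delta b), (phibar (SF _ _ Sp)). split; [split|].
  - apply PhiK_phibar.
  - apply phibar_extremal_epi, Sext, Sp.
  - exact (mge_trans (phibar_mge _ H1 G) M1).
Qed.

Section Limit.
Variables (c : KObj C)
  (psi : forall (Y : Kcat C) (chi : Hom (C := Kcat C) X Y),
           PhiK X Y chi -> Hom (C := Kcat C) c Y).
Hypothesis psi_cone :
  forall Y1 chi1 (H1 : PhiK X Y1 chi1) Y2 chi2 (H2 : PhiK X Y2 chi2) g,
    comp g chi1 = chi2 -> comp g (psi Y1 chi1 H1) = psi Y2 chi2 H2.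

Definition psiF b (phi : Hom (kd X) b) (H : kF X b phi) : Hom (kd c) b :=
  proj1_sig (psi _ _ (PhiK_phibar H)).
Arguments psiF {b phi} H.

Lemma psiF_cone b1 (f1 : Hom (kd X) b1) (H1 : kF X b1 f1)
  b2 (f2 : Hom (kd X) b2) (H2 : kF X b2 f2) (g : Hom b1 b2) :
  comp g f1 = f2 -> comp g (psiF H1) = psiF H2.
Proof.
  intros E.
  assert (EK : comp (C := Kcat C) (Delta_hom (Delta b2) g) (phibar H1) = phibar H2)
    by (apply KHom_eq; exact E).
  exact (f_equal (@proj1_sig _ _) (psi_cone _ _ _ _ _ _ _ EK)).
Qed.

Lemma psiF_mediator_Khom (h : Hom (kd c) (kd X)) :
  (forall b f (H : kF X b f), comp f h = psiF H) ->
  forall b (p : Hom (kd X) b), kF X b p -> kF c b (comp p h).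
Proof.
  intros Eh b p Hp. rewrite (Eh b p Hp). unfold psiF.
  destruct (psi _ _ (PhiK_phibar Hp)) as [q Hq]. simpl.
  rewrite <- (comp_id_l q). apply Hq. exact I.
Qed.

End Limit.
Arguments psiF_cone {c psi} psi_cone {b1 f1} H1 {b2 f2} H2 g _.
Arguments psiF_mediator_Khom {c psi h} _ b p _.

Lemma PhiK_is_iso_filtration : is_iso_filtration (C := Kcat C) (PhiK X).
Proof.
  intros c psi psi_cone.
  destruct (k_iso (@psiF_cone _ _ psi_cone)) as [h [Eh h_unique]].
  exists (exist _ h (psiF_mediator_Khom Eh) : Hom (C := Kcat C) c X). split.
  - intros Y chi Hchi. pose proof Hchi as [b [p [Hp [k Ek]]]].
    rewrite <- (psi_cone _ _ (PhiK_phibar Hp) _ _ Hchi k Ek), <- Ek.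
    apply KHom_eq. simpl. rewrite <- comp_assoc. f_equal. apply Eh.
  - intros h' Eh'. apply KHom_eq, h_unique.
    intros b f H. unfold psiF. rewrite <- (Eh' _ _ (PhiK_phibar H)). reflexivity.
Qed.

End PhiK.

Lemma PhiK_functorial (C : Category) (X Y : Kcat C) (f : Hom X Y)
  (Z : Kcat C) (chi : Hom Y Z) :
  PhiK Y Z chi -> PhiK X Z (comp chi f).
Proof.
  intros [b [p [H [k Ek]]]].
  exists b, (comp p (proj1_sig f)), (proj2_sig f b p H), k.
  rewrite <- Ek. apply KHom_eq. apply comp_assoc.
Qed.

(* The hypotheses on [D] only guarantee that [K(D)] is again a category of the
   same kind; the conclusion holds for every category. *)
Theorem mainTheorem15 (D : Category) :
  complete D -> cocomplete D -> extremally_co_well_powered D ->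
  ExtrEpiMono_category D ->
  (forall X : KObj D,
      is_filtration (C := Kcat D) (PhiK X) /\
      is_reduced (C := Kcat D) (PhiK X) /\
      is_iso_filtration (C := Kcat D) (PhiK X)) /\
  (forall (X Y : Kcat D) (f : Hom X Y) (Z : Kcat D) (chi : Hom Y Z),
      PhiK Y Z chi -> PhiK X Z (comp chi f)).
Proof.
  intros _ _ _ _. split.
  - intros X. split; [|split].
    + apply PhiK_is_filtration.
    + apply PhiK_is_reduced.
    + apply PhiK_is_iso_filtration.
  - apply PhiK_functorial.
Qed.
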